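(* Let $\omega\in\mathbb T^1\setminus\mathbb Q$, $f\in\mathcal V_\omega$, $j\in\mathbb N$ and $\theta\in\Omega_j$, where $\Omega_j=\mathbb T^1\setminus\bigcup_{k=j}^\infty\bigcup_{l=0}^{2K_kM_k}(\mathcal I_k+l\omega)$. Then for all $n\in\mathbb N$ and all integers $k$ with $0\le k\le n-(2K_{j-1}M_{j-1}-M_{j-1}-1)$ we have $i_k^n\ge p_k^n(\theta)$, where $i_k^n=\max\{l\in\mathbb N_0: n-k\ge 2K_lM_l-M_l-1\}$ and $p_k^n(\theta)=\max\{p\in\mathbb N_0:\ \exists\, l\in[M_{p-1},\min\{n,\,n-k+M_p+1\}]\cap\mathbb Z \text{ with } \theta-l\omega\in\mathcal I_p\}$, with the conventions $\max\emptyset=-1$ and $M_{-1}=0$.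
   Context: Notation: $\mathbb T^1=\mathbb R/\mathbb Z$, $d$ the usual distance on $\mathbb T^1$, $\pi_1,\pi_2$ the coordinate projections of $\mathbb T^2=\mathbb T^1\times\mathbb T^1$, $\mathrm{Leb}$ Lebesgue measure on $\mathbb T^1$. Skew products: for irrational $\omega$, $\mathcal F_\omega$ is the set of $C^1$-diffeomorphisms $f$ of $\mathbb T^2$ homotopic to the identity of the form $f(\theta,x)=(\theta+\omega,f_\theta(x))$. Write $f^k_\theta(x)=\pi_2(f^k(\theta,x))$ for $k\in\mathbb Z$. Invariant graphs: a measurable $\phi:\mathbb T^1\to\mathbb T^1$ is an invariant graph if $f_\theta(\phi(\theta))=\phi(\theta+\omega)$ for Lebesgue-a.e. $\theta$; graphs agreeing a.e. are identified. Its Lyapunov exponent is $\lambda(\phi)=\int_{\mathbb T^1}\log|\partial_xf_\theta(\phi(\theta))|\,d\theta$. It is an SNA (resp. SNR) if $\lambda(\phi)<0$ (resp. $>0$) and there is no continuous function a.e. equal to $\phi$. The associated measure is $\mu_\phi(A)=\mathrm{Leb}(\pi_1(A\cap\Phi))$, $\Phi=\{(\theta,\phi(\theta))\}$. The class $\mathcal V_\omega$: $f\in\mathcal F_\omega$ belongs to $\mathcal V_\omega$ if the following hold for some choice of data. (i) There are disjoint closed intervals $C=[c^-,c^+]$, $E=[e^-,e^+]\subseteq\mathbb T^1$ and a set $\mathcal I_0\subseteq\mathbb T^1$ which is a union of $\mathcal N$ disjoint open intervals, and constants $\alpha>4$, $S>0$, such that: $f_\theta(x)\in\mathrm{int}(C)$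 whenever $x\notin(e^-,e^+)$ and $\theta\notin\mathcal I_0$; for all $\theta,\theta',x,x'$: $\alpha^{-2}d(x,x')\le d(f_\theta(x),f_\theta(x'))\le\alpha^2d(x,x')$ and $d(f_\theta(x),f_{\theta'}(x))\le S\,d(\theta,\theta')$; $|\partial_xf_\theta(x)|\le\alpha^{-1}$ for $x\in C$; $|\partial_xf_\theta(x)|\ge\alpha$ for $x\in E$. (ii) Integers $\kappa\ge2$, $K_0\ge1$, $K_n=K_0\kappa^n$, $b_0=1$, $b_n=(1-1/K_{n-1})b_{n-1}$, with $b=\lim_n b_n>\sqrt{5/6}$. A super-exponentially increasing integer sequence $(M_n)_{n\ge0}$ with $M_0\ge2$ and $M_{n+1}\le2\alpha^{M_n/16}$. A non-increasing positive sequence $(\varepsilon_n)$ with $\varepsilon_0\le1$ and $\varepsilon_{n+1}\le2\alpha^{-M_n/4}/s$ for a fixed $s>0$. Moreover $\alpha\ge\alpha_*$ and $\varepsilon_0\le\varepsilon_*$, where $\alpha_*>1,\varepsilon_*>0$ are thresholds guaranteeing $\sum_{n\ge0}(2K_nM_n+1)\mathcal N\varepsilon_n\le\sum_{n\ge0}\varepsilon_n^{1/2}<1/16$; and each component of $\mathcal I_0$ has length $<\varepsilon_0$. (iii) Critical regions: recursively $\mathcal A_n=(\mathcal I_n-(M_n-1)\omega)\times C$, $\mathcal B_n=(\mathcal I_n+(M_n+1)\omega)\times E$, $\mathcal I_{n+1}=\mathrm{int}\,\pi_1\big(f^{M_n-1}(\mathcal A_n)\cap f^{-(M_n+1)}(\mathcal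 B_n)\big)$. Let $\mathcal W_n^+=\bigcup_{j=0}^n\bigcup_{l=1}^{M_j+1}(\mathcal I_j+l\omega)$, $\mathcal W_n^-=\bigcup_{j=0}^n\bigcup_{l=-(M_j-1)}^{0}(\mathcal I_j+l\omega)$, $\mathcal W_{-1}^\pm=\emptyset$. For every $n\in\mathbb N$: $\mathcal I_j\ne\emptyset$ for $j\le n$; $\mathcal I_j\cap\bigcup_{k=1}^{2K_jM_j}(\mathcal I_j+k\omega)=\emptyset$ for $j=0,\dots,n$; $\big((\mathcal I_j-(M_j-1)\omega)\cup(\mathcal I_j+(M_j+1)\omega)\big)\cap(\mathcal W_{j-1}^+\cup\mathcal W_{j-1}^-)=\emptyset$ for $j=1,\dots,n$; and $\mathcal I_n$ has exactly $\mathcal N$ connected components, each of length $<\varepsilon_n$. (iv) $f$ has an SNA $\phi^+$ and an SNR $\phi^-$, and $\mu_{\phi^+},\mu_{\phi^-}$ are the only $f$-invariant ergodic probability measures. (v) $f$ is minimal. *)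

From Stdlib Require Import Reals Lra Lia ZArith Arith.
Open Scope R_scope.

(* ---------- The circle T^1 = R/Z, represented by real representatives ---------- *)
Definition frac (x : R) : R := x - IZR (Int_part x).
Definition eqT (x y : R) : Prop := frac x = frac y.
Definition dT (x y : R) : R := Rmin (frac (x - y)) (1 - frac (x - y)).
(* closed arc [a,b] of T^1 (with a < b < a+1), its interior, and open arc (a, a+L) *)
Definition inArc (a b x : R) : Prop := frac (x - a) <= b - a.
Definition intArc (a b x : R) : Prop := 0 < frac (x - a) < b - a.
Definition inOpenArc (a L x : R) : Prop := 0 < frac (x - a) < L.

(* interior of a subset of R (for periodic sets = interior in T^1) *)
Definition interior (S : R -> Prop) (t : R) : Prop :=
  exists d, 0 < d /\ forall u, Rabs (u - t) < d -> S u.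

Definition has_components (S : R -> Prop) (N : nat) (eps : R) : Prop :=
  exists (a len : nat -> R),
    (forall i, (i < N)%nat -> 0 < len i < eps) /\
    (forall i i' t, (i < N)%nat -> (i' < N)%nat -> i <> i' ->
        ~ (inOpenArc (a i) (len i) t /\ inOpenArc (a i') (len i') t)) /\
    (forall t, S t <-> exists i, (i < N)%nat /\ inOpenArc (a i) (len i) t).

Definition cont2 (g : R -> R -> R) : Prop :=
  forall t x e, 0 < e -> exists d, 0 < d /\ forall t' x',
    Rabs (t' - t) < d -> Rabs (x' - x) < d -> Rabs (g t' x' - g t x) < e.

Definition C1_2 (g : R -> R -> R) : Prop :=
  exists D1 D2 : R -> R -> R, cont2 D1 /\ cont2 D2 /\
    forall t x, derivable_pt_lim (fun u => g u x) t (D1 t x) /\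
                derivable_pt_lim (g t) x (D2 t x).

(* ---------- Skew products: f(θ,x) = (θ+ω, f_θ(x)), given by the lift F2 of the
   fibre maps; homotopic to the identity means F2(θ+1,x)=F2(θ,x),
   F2(θ,x+1)=F2(θ,x)+1. ---------- *)
Definition irrational (w : R) : Prop :=
  forall p q : Z, q <> 0%Z -> w * IZR q <> IZR p.

Definition in_F (w : R) (F2 : R -> R -> R) : Prop :=
  irrational w /\
  (forall t x, F2 (t + 1) x = F2 t x /\ F2 t (x + 1) = F2 t x + 1) /\
  C1_2 F2 /\
  (exists G2 : R -> R -> R, C1_2 G2 /\
     forall t x, G2 (t + w) (F2 t x) = x /\ F2 t (G2 (t + w) x) = x).

Fixpoint fit (F2 : R -> R -> R) (w : R) (n : nat) (t x : R) : R :=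
  match n with
  | O => x
  | S m => F2 (t + INR m * w) (fit F2 w m t x)
  end.

Definition outer_le (A : R -> Prop) (c : R) : Prop :=
  forall e, 0 < e -> exists a b : nat -> R,
    (forall n, a n <= b n) /\
    (forall x, A x -> exists n, a n < x < b n) /\
    (forall N, sum_f_R0 (fun n => b n - a n) N <= c + e).

Definition leb_eq (A : R -> Prop) (m : R) : Prop :=
  outer_le A m /\ forall c, outer_le A c -> m <= c.

Definition null (A : R -> Prop) : Prop := outer_le A 0.
Definition ae (P : R -> Prop) : Prop := null (fun t => ~ P t).

Definition openR (U : R -> Prop) : Prop :=
  forall x, U x -> exists d, 0 < d /\ forall y, Rabs (y - x) < d -> U y.

Definition lebmeas (A : R -> Prop) : Prop :=
  forall e, 0 < e -> exists U, openR U /\ (forall x, A x -> U x) /\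
    outer_le (fun x => U x /\ ~ A x) e.

Definition measT (phi : R -> R) : Prop :=
  forall a b, lebmeas (fun t => a < frac (phi t) < b).

(* Lebesgue integral over T^1 = [0,1) of a bounded measurable g equals L *)
Definition level (g : R -> R) (B : R) (n i : nat) (t : R) : Prop :=
  0 <= t < 1 /\
  - B + 2 * B * INR i / INR n <= g t < - B + 2 * B * INR (S i) / INR n.

Definition integral01 (g : R -> R) (L : R) : Prop :=
  exists B, 0 < B /\ (forall t, 0 <= t < 1 -> Rabs (g t) < B) /\
  (forall a b, lebmeas (fun t => 0 <= t < 1 /\ a < g t < b)) /\
  forall e, 0 < e -> exists N0, forall n, (N0 <= n)%nat -> (0 < n)%nat ->
    forall m : nat -> R, (forall i, (i < n)%nat -> leb_eq (level g B n i) (m i)) ->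
      Rabs (sum_f_R0 (fun i => (- B + 2 * B * INR i / INR n) * m i) (n - 1) - L) < e.

Definition inv_graph (w : R) (F2 : R -> R -> R) (phi : R -> R) : Prop :=
  (forall t, eqT (phi (t + 1)) (phi t)) /\ measT phi /\
  ae (fun t => eqT (F2 t (phi t)) (phi (t + w))).

(* λ(φ) = ∫ log |∂_x f_θ(φ(θ))| dθ ; df is ∂_x F2 *)
Definition lyap_eq (df : R -> R -> R) (phi : R -> R) (L : R) : Prop :=
  integral01 (fun t => ln (Rabs (df t (phi t)))) L.

Definition not_ae_continuous (phi : R -> R) : Prop :=
  ~ exists psi : R -> R, continuity psi /\ (forall t, eqT (psi (t + 1)) (psi t)) /\
      ae (fun t => eqT (psi t) (phi t)).

Definition SNA (w : R) (F2 df : R -> R -> R) (phi : R -> R) : Prop :=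
  inv_graph w F2 phi /\ (exists L, L < 0 /\ lyap_eq df phi L) /\ not_ae_continuous phi.

Definition SNR (w : R) (F2 df : R -> R -> R) (phi : R -> R) : Prop :=
  inv_graph w F2 phi /\ (exists L, 0 < L /\ lyap_eq df phi L) /\ not_ae_continuous phi.

Definition periodic2 (A : R -> R -> Prop) : Prop :=
  forall t x, (A t x <-> A (t + 1) x) /\ (A t x <-> A t (x + 1)).
Definition openR2 (A : R -> R -> Prop) : Prop :=
  forall t x, A t x -> exists d, 0 < d /\ forall t' x',
    Rabs (t' - t) < d -> Rabs (x' - x) < d -> A t' x'.

Inductive borelT2 : (R -> R -> Prop) -> Prop :=
| bo_open (A : R -> R -> Prop) : periodic2 A -> openR2 A -> borelT2 A
| bo_compl (A : R -> R -> Prop) : borelT2 A -> borelT2 (fun t x => ~ A t x)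
| bo_union (A : nat -> R -> R -> Prop) :
    (forall n, borelT2 (A n)) -> borelT2 (fun t x => exists n, A n t x).

Definition prob_measure (mu : (R -> R -> Prop) -> R) : Prop :=
  (forall A, borelT2 A -> 0 <= mu A) /\
  mu (fun _ _ => True) = 1 /\
  (forall A B, borelT2 A -> (forall t x, A t x <-> B t x) -> mu A = mu B) /\
  (forall A : nat -> R -> R -> Prop, (forall n, borelT2 (A n)) ->
     (forall n m t x, n <> m -> A n t x -> A m t x -> False) ->
     infinite_sum (fun n => mu (A n)) (mu (fun t x => exists n, A n t x))).

Definition preim (w : R) (F2 : R -> R -> R) (A : R -> R -> Prop) : R -> R -> Prop :=
  fun t x => A (t + w) (F2 t x).

Definition invariant_measure (w : R) (F2 : R -> R -> R) (mu : (R -> R -> Prop) -> R) : Prop :=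
  forall A, borelT2 A -> mu (preim w F2 A) = mu A.

Definition ergodic_measure (w : R) (F2 : R -> R -> R) (mu : (R -> R -> Prop) -> R) : Prop :=
  forall A, borelT2 A -> (forall t x, preim w F2 A t x <-> A t x) ->
    mu A = 0 \/ mu A = 1.

Definition is_graph_measure (phi : R -> R) (mu : (R -> R -> Prop) -> R) : Prop :=
  forall A, borelT2 A -> leb_eq (fun t => 0 <= t < 1 /\ A t (phi t)) (mu A).

Definition minimal (w : R) (F2 : R -> R -> R) : Prop :=
  forall t0 x0 t x e, 0 < e -> exists n : nat,
    dT (t0 + INR n * w) t < e /\ dT (fit F2 w n t0 x0) x < e.

Fixpoint Icrit (F2 : R -> R -> R) (w c1 c2 e1 e2 : R) (I0 : R -> Prop)
    (M : nat -> nat) (n : nat) : R -> Prop :=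
  match n with
  | O => I0
  | S m =>
    let In := Icrit F2 w c1 c2 e1 e2 I0 M m in
    (* A_m = (I_m - (M_m-1)ω) × C,  B_m = (I_m + (M_m+1)ω) × E,
       I_{m+1} = int π1( f^{M_m-1}(A_m) ∩ f^{-(M_m+1)}(B_m) ) *)
    interior (fun t' => exists t y,
       (In (t + INR (M m - 1) * w) /\ inArc c1 c2 y) /\
       eqT t' (t + INR (M m - 1) * w) /\
       (In (t' + INR (M m + 1) * w - INR (M m + 1) * w) /\
        inArc e1 e2 (fit F2 w (M m + 1) t' (fit F2 w (M m - 1) t y))))
  end.

Definition Kseq (K0 kappa : nat) (n : nat) : nat := (K0 * kappa ^ n)%nat.

Fixpoint bseq (K : nat -> nat) (n : nat) : R :=
  match n with
  | O => 1
  | S m => (1 - / INR (K m)) * bseq K m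
  end.

Definition in_V (w : R) (F2 df : R -> R -> R)
    (c1 c2 e1 e2 : R) (I0 : R -> Prop) (Ncomp : nat) (alpha Sc : R)
    (kappa K0 : nat) (M : nat -> nat) (eps : nat -> R) (s : R) : Prop :=
  let K := Kseq K0 kappa in
  let I := Icrit F2 w c1 c2 e1 e2 I0 M in
  in_F w F2 /\
  (forall t x, derivable_pt_lim (F2 t) x (df t x)) /\
  (c1 < c2 /\ c2 - c1 < 1 /\ e1 < e2 /\ e2 - e1 < 1 /\
   (forall x, ~ (inArc c1 c2 x /\ inArc e1 e2 x))) /\
  has_components I0 Ncomp (eps O) /\
  4 < alpha /\ 0 < Sc /\
  (forall t x, ~ (0 < frac (x - e1) < e2 - e1) -> ~ I0 t -> intArc c1 c2 (F2 t x)) /\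
  (forall t x x', / alpha ^ 2 * dT x x' <= dT (F2 t x) (F2 t x') /\
                  dT (F2 t x) (F2 t x') <= alpha ^ 2 * dT x x') /\
  (forall t t' x, dT (F2 t x) (F2 t' x) <= Sc * dT t t') /\
  (forall t x, inArc c1 c2 x -> Rabs (df t x) <= / alpha) /\
  (forall t x, inArc e1 e2 x -> alpha <= Rabs (df t x)) /\
  (2 <= kappa)%nat /\ (1 <= K0)%nat /\
  (exists b, Un_cv (bseq K) b /\ sqrt (5 / 6) < b) /\
  (forall n, (M n < M (S n))%nat) /\
  (forall C, exists N0, forall n, (N0 <= n)%nat -> C * INR (M n) <= INR (M (S n))) /\
  (2 <= M O)%nat /\
  (forall n, INR (M (S n)) <= 2 * Rpower alpha (INR (M n) / 16)) /\
  (forall n, 0 < eps n /\ eps (S n) <= eps n) /\ eps O <= 1 /\ 0 < s /\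
  (forall n, eps (S n) <= 2 * Rpower alpha (- INR (M n) / 4) / s) /\
  (* what the thresholds α_*, ε_* guarantee *)
  (exists s1 s2,
     infinite_sum (fun n => INR ((2 * K n * M n + 1) * Ncomp) * eps n) s1 /\
     infinite_sum (fun n => sqrt (eps n)) s2 /\ s1 <= s2 /\ s2 < 1 / 16) /\
  (forall j, exists t, I j t) /\
  (forall j k t, (1 <= k <= 2 * K j * M j)%nat -> I j t -> ~ I j (t - INR k * w)) /\
  (forall j t, (1 <= j)%nat ->
     (I j (t + INR (M j - 1) * w) \/ I j (t - INR (M j + 1) * w)) ->
     ~ ((exists i l, (i <= j - 1)%nat /\ (1 <= l <= M i + 1)%nat /\ I i (t - INR l * w)) \/
        (exists i l, (i <= j - 1)%nat /\ (l <= M i - 1)%nat /\ I i (t + INR l * w)))) /\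
  (forall j, has_components (I j) Ncomp (eps j)) /\
  (exists phip phim, SNA w F2 df phip /\ SNR w F2 df phim /\
     forall mu, prob_measure mu -> invariant_measure w F2 mu ->
       ergodic_measure w F2 mu -> is_graph_measure phip mu \/ is_graph_measure phim mu) /\
  minimal w F2.

(* max of a subset of N_0, with the convention max ∅ = -1 *)
Definition is_maxZ (P : nat -> Prop) (m : Z) : Prop :=
  (m = (-1)%Z /\ forall p, ~ P p) \/
  ((0 <= m)%Z /\ P (Z.to_nat m) /\ forall p, P p -> (Z.of_nat p <= m)%Z).

Definition crit (K M : nat -> nat) (l : nat) : Z :=
  (2 * Z.of_nat (K l) * Z.of_nat (M l) - Z.of_nat (M l) - 1)%Z.

Definition Mprev (M : nat -> nat) (p : nat) : Z :=
  match p with O => 0%Z | S q => Z.of_nat (M q) end.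

(* The depth index [p] is realised by a visit [theta - l w] of [I_p] with
   [l <= n - k + M_p + 1].  If [p >= j], then [theta] lying in [Omega_j] forces
   [l > 2 K_p M_p], so [n - k >= 2 K_p M_p - M_p - 1] and [p <= i] by maximality of
   [i]; if [p < j], then [p <= j - 1 <= i] because the range of [k] guarantees that
   [j - 1] is a candidate for [i].  Both maxima exist since [crit l > l]. *)

From Stdlib Require Import Reals ZArith Arith Lia Classical.
Open Scope R_scope.

Lemma is_maxZ_exists (B : nat) (P : nat -> Prop) :
  (forall p, P p -> (p <= B)%nat) -> exists m, is_maxZ P m.
Proof.
  revert P; induction B as [|B IH]; intros P HP.
  - destruct (classic (P 0%nat)) as [H0|H0].
    + exists 0%Z; right; repeat split; [lia | exact H0 |].
      intros p Hp; specialize (HP p Hp); lia.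
    + exists (-1)%Z; left; split; [reflexivity |].
      intros p Hp; replace p with 0%nat in Hp by (specialize (HP p Hp); lia).
      contradiction.
  - destruct (classic (P (S B))) as [HB|HB].
    + exists (Z.of_nat (S B)); right; rewrite Nat2Z.id.
      repeat split; [lia | exact HB |].
      intros p Hp; specialize (HP p Hp); lia.
    + apply IH; intros p Hp; specialize (HP p Hp).
      destruct (Nat.eq_dec p (S B)) as [->|]; [contradiction | lia].
Qed.

Lemma is_maxZ_ub (P : nat -> Prop) (m : Z) (q : nat) :
  is_maxZ P m -> P q -> (Z.of_nat q <= m)%Z.
Proof.
  intros [[_ Hnone] | (_ & _ & Hmax)] Hq; [now destruct (Hnone q) | exact (Hmax q Hq)].
Qed.

Lemma is_maxZ_le (P : nat -> Prop) (m b : Z) :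
  is_maxZ P m -> (-1 <= b)%Z -> (forall q, P q -> (Z.of_nat q <= b)%Z) -> (m <= b)%Z.
Proof.
  intros [[-> _] | (Hm & HPm & _)] Hb Hub; [exact Hb |].
  specialize (Hub _ HPm); rewrite Z2Nat.id in Hub by exact Hm; exact Hub.
Qed.

Lemma increasing_ge_index (M : nat -> nat) (m0 : nat) :
  (forall n, (M n < M (S n))%nat) -> (m0 <= M O)%nat ->
  forall l, (l + m0 <= M l)%nat.
Proof.
  intros Hinc H0 l; induction l as [|l IH]; [exact H0 |].
  specialize (Hinc l); lia.
Qed.

Lemma Kseq_ge1 (K0 kappa : nat) :
  (1 <= K0)%nat -> (1 <= kappa)%nat -> forall l, (1 <= Kseq K0 kappa l)%nat.
Proof.
  intros HK0 Hkappa l; unfold Kseq.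
  assert (Hpow : (1 <= kappa ^ l)%nat) by (apply Nat.le_succ_l, Nat.neq_0_lt_0, Nat.pow_nonzero; lia).
  nia.
Qed.

Lemma crit_gt_index (K M : nat -> nat) (l : nat) :
  (1 <= K l)%nat -> (l + 2 <= M l)%nat -> (Z.of_nat l + 1 <= crit K M l)%Z.
Proof. unfold crit; nia. Qed.

Lemma in_V_growth w F2 df c1 c2 e1 e2 I0 Ncomp alpha Sc kappa K0 M eps s :
  in_V w F2 df c1 c2 e1 e2 I0 Ncomp alpha Sc kappa K0 M eps s ->
  forall l, (Z.of_nat l + 1 <= crit (Kseq K0 kappa) M l)%Z.
Proof.
  intros (_ & _ & _ & _ & _ & _ & _ & _ & _ & _ & _ & Hkappa & HK0 & _ & Hinc & _ & HM0 & _) l.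
  apply crit_gt_index.
  - apply Kseq_ge1; lia.
  - apply increasing_ge_index; assumption.
Qed.

Lemma crit_le_of_visit_outside_Omega (K M : nat -> nat) (I : nat -> R -> Prop)
    (w theta : R) (j q : nat) (l N : Z) :
  (forall k l', (j <= k)%nat -> (l' <= 2 * K k * M k)%nat -> ~ I k (theta - INR l' * w)) ->
  (j <= q)%nat -> (0 <= l)%Z -> (l <= N + Z.of_nat (M q) + 1)%Z ->
  I q (theta - IZR l * w) -> (crit K M q <= N)%Z.
Proof.
  intros HOmega Hjq Hl0 Hl Hvisit.
  destruct (le_lt_dec (Z.to_nat l) (2 * K q * M q)) as [Hin | Hout].
  - exfalso; apply (HOmega q (Z.to_nat l) Hjq Hin).
    rewrite INR_IZR_INZ, Z2Nat.id by exact Hl0; exact Hvisit.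
  - unfold crit; apply Nat2Z.inj_lt in Hout.
    rewrite Z2Nat.id, !Nat2Z.inj_mul in Hout by exact Hl0; lia.
Qed.

Theorem proposition4p4 :
  forall (w : R) (F2 df : R -> R -> R) (c1 c2 e1 e2 : R) (I0 : R -> Prop)
    (Ncomp : nat) (alpha Sc : R) (kappa K0 : nat) (M : nat -> nat)
    (eps : nat -> R) (s : R),
  in_V w F2 df c1 c2 e1 e2 I0 Ncomp alpha Sc kappa K0 M eps s ->
  forall (j : nat) (theta : R),
  (1 <= j)%nat ->
  (* theta ∈ Ω_j *)
  (forall k l, (j <= k)%nat -> (l <= 2 * Kseq K0 kappa k * M k)%nat ->
     ~ Icrit F2 w c1 c2 e1 e2 I0 M k (theta - INR l * w)) ->
  forall (n : nat) (k : Z),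
  (1 <= n)%nat ->
  (0 <= k)%Z ->
  (k <= Z.of_nat n - crit (Kseq K0 kappa) M (j - 1))%Z ->
  exists i p : Z,
    is_maxZ (fun l => (Z.of_nat n - k >= crit (Kseq K0 kappa) M l)%Z) i /\
    is_maxZ (fun q => exists l : Z,
                (Mprev M q <= l)%Z /\
                (l <= Z.min (Z.of_nat n) (Z.of_nat n - k + Z.of_nat (M q) + 1))%Z /\
                Icrit F2 w c1 c2 e1 e2 I0 M q (theta - IZR l * w)) p /\
    (p <= i)%Z.
Proof.
  intros w F2 df c1 c2 e1 e2 I0 Ncomp alpha Sc kappa K0 M eps s HV j theta Hj HOmega
    n k _ _ Hk.
  pose proof (in_V_growth _ _ _ _ _ _ _ _ _ _ _ _ _ _ _ _ HV) as Hcrit.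
  set (Pi := fun l => (Z.of_nat n - k >= crit (Kseq K0 kappa) M l)%Z).
  set (Pp := fun q => exists l : Z,
                (Mprev M q <= l)%Z /\
                (l <= Z.min (Z.of_nat n) (Z.of_nat n - k + Z.of_nat (M q) + 1))%Z /\
                Icrit F2 w c1 c2 e1 e2 I0 M q (theta - IZR l * w)).
  destruct (is_maxZ_exists (Z.to_nat (Z.of_nat n - k)) Pi) as [i Hi].
  { intros l Hl; specialize (Hcrit l); unfold Pi in Hl; lia. }
  assert (Hji : (Z.of_nat (j - 1) <= i)%Z) by (apply (is_maxZ_ub Pi); [exact Hi | unfold Pi; lia]).
  assert (HPp : forall q, Pp q -> (Z.of_nat q <= i)%Z).
  { intros q (l & Hl0 & Hl & Hvisit).
    destruct (le_lt_dec j q) as [Hjq | Hqj]; [| lia].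
    apply (is_maxZ_ub Pi); [exact Hi |]; unfold Pi.
    enough (crit (Kseq K0 kappa) M q <= Z.of_nat n - k)%Z by lia.
    apply (crit_le_of_visit_outside_Omega _ _ (Icrit F2 w c1 c2 e1 e2 I0 M) w theta j q l);
      [exact HOmega | exact Hjq | destruct q; simpl in Hl0; lia | lia | exact Hvisit]. }
  destruct (is_maxZ_exists (Z.to_nat i) Pp) as [p Hp].
  { intros q Hq; specialize (HPp q Hq); lia. }
  exists i, p; repeat split; [exact Hi | exact Hp |].
  apply (is_maxZ_le Pp); [exact Hp | lia | exact HPp].
Qed.
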